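(* Let $\mathcal A$ be a Banach algebra. The following are equivalent: (i) $\mathcal A$ is amenable. (ii) For every Banach algebra $\mathcal B$ and every continuous homomorphism $\varphi:\mathcal A\to\mathcal B$, $H^1(\mathcal A,\mathcal B_\varphi^* )=\{0\}$. (iii) For every Banach algebra $\mathcal B$ and every injective continuous homomorphism $\varphi:\mathcal A\to\mathcal B$, $H^1(\mathcal A,\mathcal B_\varphi^* )=\{0\}$. (iv) For every Banach algebra $\mathcal B$ and every injective continuous homomorphism $\varphi:\mathcal A\to\mathcal B$, every bounded derivation $d:\mathcal A\to\mathcal B_\varphi^*$ satisfying $\langle d(a),\varphi(b)\rangle+\langle d(b),\varphi(a)\rangle=0$ for all $a,b\in\mathcal A$ is inner. (v) For every Banach algebra $\mathcal B$ and every injective continuous homomorphism $\varphi:\mathcal A\to\mathcal B$, $H^1(\mathcal A,\mathcal B_\varphi^{**})=\{0\}$.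
   Context: For a Banach $\mathcal A$-bimodule $X$, the dual $X^*$ is a Banach $\mathcal A$-bimodule via $\langle x,a\cdot x^*\rangle=\langle x\cdot a,x^*\rangle$ and $\langle x,x^*\cdot a\rangle=\langle a\cdot x,x^*\rangle$; iterating gives the bimodule $X^{**}$. For a continuous homomorphism $\varphi:\mathcal A\to\mathcal B$ of Banach algebras, $\mathcal B_\varphi$ denotes $\mathcal B$ regarded as a Banach $\mathcal A$-bimodule with $a\cdot b=\varphi(a)b$, $b\cdot a=b\varphi(a)$. A derivation $D:\mathcal A\to X$ is a bounded linear map with $D(ab)=D(a)\cdot b+a\cdot D(b)$; it is inner if $D(a)=a\cdot x-x\cdot a$ for some $x\in X$. $H^1(\mathcal A,X)$ is the space of derivations modulo inner derivations. $\mathcal A$ is amenable if $H^1(\mathcal A,X^* )=\{0\}$ for every Banach $\mathcal A$-bimodule $X$. *)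

(* Complex Banach spaces are modelled as
   [completeNormedModType R[i]] for an arbitrary [R : realType]
   ([R[i]] = complex numbers over R, from mathcomp-real-closed). *)
From mathcomp Require Import all_boot all_algebra.
From mathcomp Require Import all_classical all_reals all_analysis.
From mathcomp Require Import complex.
Import numFieldNormedType.Exports.
Set Implicit Arguments. Unset Strict Implicit. Unset Printing Implicit Defensive.
Local Open Scope ring_scope.

Section BanachDefs.
Variable R : realType.
Local Notation K := (R[i]).

Definition lin (V W : lmodType K) (f : V -> W) : Prop :=
  forall (k : K) (u v : V), f (k *: u + v) = k *: f u + f v.

Definition bilin (U V W : lmodType K) (m : U -> V -> W) : Prop :=
  (forall u, lin (m u)) /\ (forall v, lin (fun u => m u v)).

Definition banach_algebra (A : completeNormedModType K) (mul : A -> A -> A) : Prop :=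
  [/\ bilin mul, associative mul & forall x y, `|mul x y| <= `|x| * `|y| ].

Definition cont_hom (A B : completeNormedModType K)
  (mulA : A -> A -> A) (mulB : B -> B -> B) (phi : A -> B) : Prop :=
  [/\ lin phi, (forall a b, phi (mulA a b) = mulB (phi a) (phi b)) & continuous phi].

(* Banach A-bimodule: left action [l a x = a . x], right action [r x a = x . a] *)
Definition banach_bimodule (A : completeNormedModType K) (mulA : A -> A -> A)
  (X : completeNormedModType K) (l : A -> X -> X) (r : X -> A -> X) : Prop :=
  [/\ bilin l /\ bilin (fun a x => r x a),
      (forall a b x, l (mulA a b) x = l a (l b x)),
      (forall a b x, r x (mulA a b) = r (r x a) b),
      (forall a b x, r (l a x) b = l a (r x b)) &
      exists C : R, forall a x,
        `|l a x| <= (C%:C)%C * `|a| * `|x| /\ `|r x a| <= (C%:C)%C * `|a| * `|x| ].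

Definition bounded_functional (X : normedModType K) (f : X -> K) : Prop :=
  lin f /\ exists M : R, forall x, `|f x| <= (M%:C)%C * `|x|.

Section Dual.
Variables (A : completeNormedModType K) (mulA : A -> A -> A).
Variables (X : completeNormedModType K) (l : A -> X -> X) (r : X -> A -> X).

(* A bounded derivation D : A -> X^{*}, written as D a x = <x, D a>.
   Dual module: <x, a.f> = <x.a, f>, <x, f.a> = <a.x, f>. *)
Definition dual_derivation (D : A -> X -> K) : Prop :=
  [/\ (forall a, lin (D a)),
      (forall (k : K) a b x, D (k *: a + b) x = k * D a x + D b x),
      (exists C : R, forall a x, `|D a x| <= (C%:C)%C * `|a| * `|x|) &
      (* D(ab) = D(a).b + a.D(b) *)
      forall a b x, D (mulA a b) x = D a (l b x) + D b (r x a) ].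

(* D is inner: D a = a.f - f.a for some f in X^{*} *)
Definition dual_inner (D : A -> X -> K) : Prop :=
  exists f : X -> K, bounded_functional f /\
    forall a x, D a x = f (r x a) - f (l a x).

Definition H1_dual_trivial : Prop :=
  forall D, dual_derivation D -> dual_inner D.

(* Elements of X^{**} are represented as functions F : (X -> K) -> K, only
   their values on bounded linear functionals being relevant.
   Bidual module: <f, a.F> = <f.a, F>, <f, F.a> = <a.f, F>,
   where (f.a)(x) = f(a.x), (a.f)(x) = f(x.a). *)
Definition bidual_elem (F : (X -> K) -> K) : Prop :=
  (forall (k : K) f g, bounded_functional f -> bounded_functional g ->
     F (fun x => k * f x + g x) = k * F f + F g) /\
  exists C : R, forall (f : X -> K) (M : R), lin f -> 0 <= M ->
     (forall x, `|f x| <= (M%:C)%C * `|x|) -> `|F f| <= (C%:C)%C * (M%:C)%C.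

Definition bidual_derivation (D : A -> (X -> K) -> K) : Prop :=
  [/\ (forall a, bidual_elem (D a)),
      (forall (k : K) a b f, bounded_functional f ->
          D (k *: a + b) f = k * D a f + D b f),
      (exists C : R, forall a (f : X -> K) (M : R), lin f -> 0 <= M ->
          (forall x, `|f x| <= (M%:C)%C * `|x|) -> `|D a f| <= (C%:C)%C * `|a| * (M%:C)%C) &
      (* D(ab) = D(a).b + a.D(b) *)
      forall a b f, bounded_functional f ->
        D (mulA a b) f = D a (fun x => f (r x b)) + D b (fun x => f (l a x)) ].

(* D is inner: D a = a.F - F.a for some F in X^{**} *)
Definition bidual_inner (D : A -> (X -> K) -> K) : Prop :=
  exists F : (X -> K) -> K, bidual_elem F /\
    forall a f, bounded_functional f ->
      D a f = F (fun x => f (l a x)) - F (fun x => f (r x a)).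

Definition H1_bidual_trivial : Prop :=
  forall D, bidual_derivation D -> bidual_inner D.

End Dual.

Definition amenable (A : completeNormedModType K) (mulA : A -> A -> A) : Prop :=
  forall (X : completeNormedModType K) (l : A -> X -> X) (r : X -> A -> X),
    banach_bimodule mulA l r -> H1_dual_trivial mulA l r.

Definition lact_phi (A B : completeNormedModType K) (mulB : B -> B -> B)
  (phi : A -> B) : A -> B -> B := fun a b => mulB (phi a) b.
Definition ract_phi (A B : completeNormedModType K) (mulB : B -> B -> B)
  (phi : A -> B) : B -> A -> B := fun b a => mulB b (phi a).

End BanachDefs.

From HB Require Import structures.
From mathcomp Require Import all_boot all_order all_algebra.
From mathcomp Require Import all_classical all_reals all_analysis.
From mathcomp Require Import complex.
Import numFieldNormedType.Exports.
Import Order.TTheory GRing.Theory Num.Theory.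
Set Implicit Arguments. Unset Strict Implicit. Unset Printing Implicit Defensive.
Local Open Scope ring_scope.
Local Open Scope classical_set_scope.
Local Open Scope complex_scope.

(* (i) => (ii) holds because B_phi is a Banach A-bimodule, and (ii) => (iii) => (iv)
   are specialisations.  For (iv) => (i), let X be a Banach A-bimodule and
   D : A -> X^* a derivation.  The space A (+) X with the product
   (a, x)(b, y) = (ab, a.y + x.b), suitably rescaled, is a Banach algebra B into
   which A embeds injectively, and B_phi contains X as a bimodule summand.  The
   map d(a)(b, x) = <x, D a> is a derivation into B_phi^* that vanishes on phi(A),
   so it satisfies the symmetry condition of (iv); restricting an implementing
   functional to X shows that D is inner.  For (v) => (i) the same construction
   is applied to X^*: D, seen in the bidual of A (+) X^* through the second
   summand, is a derivation into B_phi^**, and evaluating an implementing element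
   at the points of X recovers D as inner.  Finally (i) => (v) because X^** is the
   dual of the Banach bimodule X^*, which is complete for the operator norm. *)

(** * Complex scalars and linear maps *)

Section ComplexScalars.
Variable R : realType.
Local Notation K := R[i].
Local Notation Re := (@complex.Re R).
Local Notation Im := (@complex.Im R).

Lemma ger0_complexE (z : K) : 0 <= z -> z = (Re z)%:C.
Proof. by move=> z0; rewrite [LHS]complexE (ger0_Im z0) mulr0 addr0. Qed.

Lemma Re_ge0 (z : K) : 0 <= z -> 0 <= Re z.
Proof. by move=> z0; rewrite -ler0c -ger0_complexE. Qed.

Lemma normr_complexE (V : normedModType K) (x : V) : `|x| = (Re `|x|)%:C.
Proof. exact: ger0_complexE. Qed.

Lemma normc_complexE (z : K) : `|z| = (Re `|z|)%:C.
Proof. exact: ger0_complexE. Qed.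

Lemma real_complexD (a b : R) : (a + b)%:C = a%:C + b%:C :> K.
Proof. exact: rmorphD. Qed.

Lemma real_complexM (a b : R) : (a * b)%:C = a%:C * b%:C :> K.
Proof. exact: rmorphM. Qed.

Lemma real_complexV (a : R) : a^-1%:C = (a%:C)^-1 :> K.
Proof. exact: fmorphV. Qed.

Lemma normc_Re_le (z : K) : `|Re z| <= Re `|z|.
Proof.
rewrite normc_def /= -sqrtr_sqr ler_sqrt ?addr_ge0 ?sqr_ge0 //.
by rewrite lerDl sqr_ge0.
Qed.

Lemma normc_Im_le (z : K) : `|Im z| <= Re `|z|.
Proof.
rewrite normc_def /= -sqrtr_sqr ler_sqrt ?addr_ge0 ?sqr_ge0 //.
by rewrite lerDr sqr_ge0.
Qed.

Lemma normc_le_ReIm (a b : R) : `|a +i* b| <= (`|a| + `|b|)%:C.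
Proof.
rewrite normc_def lecR /= -[X in _ <= X]ger0_norm ?addr_ge0 // -sqrtr_sqr.
rewrite ler_sqrt ?sqr_ge0 // sqrrD !real_normK ?num_real //.
by rewrite -addrA lerD2l lerDr mulrn_wge0 // mulr_ge0.
Qed.

Lemma complex_cauchy_cvg (F : set_system (K : numFieldType)) :
  ProperFilter F -> cauchy F -> cvg F.
Proof.
move=> FF /cauchy_ballP FC.
have part_cvg (p : K -> R) : (forall z w, `|p z - p w| <= Re `|z - w|) -> cvg (p @ F).
  move=> p_lip; apply: cauchy_cvg; apply/cauchy_ballP => e e0.
  rewrite near_map2; apply: filterS (FC e%:C _); last by rewrite ltcR.
  move=> -[z w] /=; rewrite -!ball_normE /= => zw.
  by apply: le_lt_trans (p_lip z w) _; rewrite -ltcR -normc_complexE.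
have Re_cvg : cvg (Re @ F).
  by apply: part_cvg => z w; rewrite -raddfB; apply: normc_Re_le.
have Im_cvg : cvg (Im @ F).
  by apply: part_cvg => z w; rewrite -raddfB; apply: normc_Im_le.
apply/cvg_ex; exists (lim (Re @ F) +i* lim (Im @ F)).
apply/cvgrPdist_lt => e e0.
have e2 : 0 < Re e / 2 by rewrite divr_gt0 // -ltcR -ger0_complexE ?ltW.
have /cvgrPdist_lt/(_ _ e2) := Re_cvg; have /cvgrPdist_lt/(_ _ e2) := Im_cvg.
apply: filterS2 => z Imz Rez.
have -> : lim (Re @ F) +i* lim (Im @ F) - z =
          (lim (Re @ F) - Re z) +i* (lim (Im @ F) - Im z) by case: z Imz Rez.
apply: le_lt_trans (normc_le_ReIm _ _) _.
by rewrite (ger0_complexE (ltW e0)) ltcR [Re e]splitr ltrD.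
Qed.

Lemma ler_max0_mul (C : R) (z : K) : 0 <= z -> C%:C * z <= (Num.max C 0)%:C * z.
Proof. by move=> z0; rewrite ler_wpM2r // lecR le_max lexx. Qed.

End ComplexScalars.

Section LinearMaps.
Variables (R : realType) (V W : lmodType R[i]) (f : V -> W).
Hypothesis f_lin : lin f.

Lemma lin0 : f 0 = 0.
Proof.
have := f_lin 1 0 0; rewrite !scale1r addr0 => f00.
by apply/eqP; rewrite -(subrr (f 0)) {2}f00 addrK.
Qed.

Lemma linD u v : f (u + v) = f u + f v.
Proof. by have := f_lin 1 u v; rewrite !scale1r. Qed.

Lemma linZ k u : f (k *: u) = k *: f u.
Proof. by have := f_lin k u 0; rewrite !addr0 lin0 addr0. Qed.

End LinearMaps.

Lemma lin_comp (R : realType) (U V W : lmodType R[i]) (f : V -> W) (g : U -> V) :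
  lin f -> lin g -> lin (f \o g).
Proof. by move=> hf hg k u v /=; rewrite hg hf. Qed.

Lemma closed_closed_ball_num (R : numFieldType) (V : normedModType R) (x : V) (r : R) :
  closed [set y | `|x - y| <= r].
Proof.
move=> y clo_y; apply/ler_addgt0Pr => e e0.
have [z [/= xz yz]] := clo_y _ (nbhsx_ballx y e e0).
rewrite -ball_normE /= in yz.
by apply: le_trans (ler_distD z x y) _; rewrite lerD // distrC ltW.
Qed.

Lemma near2_square T (F : set_system T) (FF : Filter F) (P : T -> T -> Prop) :
  (\forall x & y \near F, P x y) -> exists2 S, F S & forall x y, S x -> S y -> P x y.
Proof.
case=> -[A B] /= [FA FB] ABP; exists (A `&` B); first exact: filterI.
by move=> x y [Ax _] [_ By]; apply: (ABP (x, y)).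
Qed.

(** * The dual Banach space *)

Section BoundedFunctionals.
Variables (R : realType) (X : normedModType R[i]).
Implicit Types f g : X -> R[i].

Lemma bounded_functional0 : bounded_functional (fun _ : X => 0 : R[i]).
Proof.
split; first by move=> k u v; rewrite scaler0 addr0.
by exists 0 => x; rewrite normr0 mul0r.
Qed.

Lemma bounded_functionalD f g : bounded_functional f -> bounded_functional g ->
  bounded_functional (fun x => f x + g x).
Proof.
move=> [lf [M hM]] [lg [N hN]]; split.
  by move=> k u v; rewrite lf lg scalerDr addrACA.
exists (M + N) => x; rewrite real_complexD mulrDl.
by apply: le_trans (ler_normD _ _) _; apply: lerD.
Qed.

Lemma bounded_functionalN f : bounded_functional f -> bounded_functional (fun x => - f x).
Proof.
move=> [lf [M hM]]; split; last by exists M => x; rewrite normrN.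
by move=> k u v; rewrite lf opprD scalerN.
Qed.

Lemma bounded_functionalZ (k : R[i]) f : bounded_functional f ->
  bounded_functional (fun x => k * f x).
Proof.
move=> [lf [M hM]]; split.
  by move=> a u v; rewrite lf mulrDr /GRing.scale /= mulrCA.
exists (complex.Re `|k| * M) => x; rewrite normrM real_complexM -normc_complexE -mulrA.
by rewrite ler_wpM2l.
Qed.

End BoundedFunctionals.

Section DualSpace.
Variables (R : realType) (X : normedModType R[i]).
Local Notation K := R[i].
Local Notation Re := (@complex.Re R).

Record dual_space := DualSpace {
  dual_fun :> X -> K;
  dual_funP : bounded_functional dual_fun }.

Implicit Types (f g h : dual_space) (k : K).

Lemma dual_space_ext (f g : dual_space) : dual_fun f = dual_fun g -> f = g.
Proof.
case: f g => f fP [g gP] /= fg; subst g; congr DualSpace; exact: Prop_irrelevance.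
Qed.

HB.instance Definition _ := gen_eqMixin dual_space.
HB.instance Definition _ := gen_choiceMixin dual_space.

Definition dual_zero := DualSpace (bounded_functional0 X).
Definition dual_add f g := DualSpace (bounded_functionalD (dual_funP f) (dual_funP g)).
Definition dual_opp f := DualSpace (bounded_functionalN (dual_funP f)).
Definition dual_scale k f := DualSpace (bounded_functionalZ k (dual_funP f)).

Lemma eq_dual_space f g : (forall x, f x = g x) -> f = g.
Proof. by move=> fg; apply/dual_space_ext/funext. Qed.

Lemma dual_addA : associative dual_add.
Proof. by move=> f g h; apply: eq_dual_space => x /=; rewrite addrA. Qed.
Lemma dual_addC : commutative dual_add.
Proof. by move=> f g; apply: eq_dual_space => x /=; rewrite addrC. Qed.
Lemma dual_add0 : left_id dual_zero dual_add.
Proof. by move=> f; apply: eq_dual_space => x /=; rewrite add0r. Qed.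
Lemma dual_addN : left_inverse dual_zero dual_opp dual_add.
Proof. by move=> f; apply: eq_dual_space => x /=; rewrite addNr. Qed.

HB.instance Definition _ :=
  GRing.isZmodule.Build dual_space dual_addA dual_addC dual_add0 dual_addN.

Lemma dual_scaleA a b f : dual_scale a (dual_scale b f) = dual_scale (a * b) f.
Proof. by apply: eq_dual_space => x /=; rewrite mulrA. Qed.
Lemma dual_scale1 : left_id 1 dual_scale.
Proof. by move=> f; apply: eq_dual_space => x /=; rewrite mul1r. Qed.
Lemma dual_scaleDr : right_distributive dual_scale +%R.
Proof. by move=> k f g; apply: eq_dual_space => x /=; rewrite mulrDr. Qed.
Lemma dual_scaleDl f : {morph dual_scale^~ f : a b / a + b}.
Proof. by move=> a b; apply: eq_dual_space => x /=; rewrite mulrDl. Qed.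

HB.instance Definition _ := GRing.Zmodule_isLmodule.Build K dual_space
  dual_scaleA dual_scale1 dual_scaleDr dual_scaleDl.

Definition functional_bounds (f : X -> K) : set R :=
  [set M | 0 <= M /\ forall x, `|f x| <= M%:C * `|x|].

Definition dual_normR (f : dual_space) : R := inf (functional_bounds f).

Lemma functional_bounds_neq0 (f : dual_space) : functional_bounds f !=set0.
Proof.
case: (dual_funP f) => _ [M hM]; exists (Num.max M 0).
by split; [rewrite le_max lexx orbT | move=> x; apply: le_trans (hM x) (ler_max0_mul _ _)].
Qed.

Lemma dual_normR_ge0 f : 0 <= dual_normR f.
Proof. by apply: lb_le_inf; [exact: functional_bounds_neq0 | move=> M []]. Qed.

Lemma dual_normR_le f M : functional_bounds f M -> dual_normR f <= M.
Proof. by apply: ge_inf; exists 0 => N []. Qed.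

Lemma dual_normR_bound f x : `|f x| <= (dual_normR f)%:C * `|x|.
Proof.
rewrite (normr_complexE x) normc_complexE -real_complexM lecR.
have [x0|x_neq0] := eqVneq x 0.
  by rewrite x0 (lin0 (dual_funP f).1) !normr0 mulr0.
have x_gt0 : 0 < Re `|x| by rewrite -ltcR -normr_complexE normr_gt0.
rewrite -ler_pdivrMr //; apply: lb_le_inf; first exact: functional_bounds_neq0.
move=> M [_ hM]; rewrite ler_pdivrMr //.
by have := hM x; rewrite (normr_complexE x) normc_complexE -real_complexM lecR.
Qed.

Lemma dual_normR_comp (Y : normedModType K) (g : Y -> X) (c : R) f :
  (forall y, `|g y| <= c%:C * `|y|) -> forall y, `|f (g y)| <= (dual_normR f * c)%:C * `|y|.
Proof.
move=> gc y; apply: le_trans (dual_normR_bound f _) _.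
by rewrite real_complexM -mulrA ler_wpM2l ?ler0c ?dual_normR_ge0.
Qed.

Lemma dual_compP (Y : normedModType K) (g : Y -> X) (c : R) f :
  lin g -> (forall y, `|g y| <= c%:C * `|y|) -> bounded_functional (fun y => f (g y)).
Proof.
move=> g_lin g_bound; split; first exact: lin_comp (dual_funP f).1 g_lin.
by exists (dual_normR f * c); apply: dual_normR_comp.
Qed.

Lemma dual_normR_scale k f : dual_normR (k *: f) <= Re `|k| * dual_normR f.
Proof.
apply: dual_normR_le; split; first by rewrite mulr_ge0 ?Re_ge0 ?dual_normR_ge0.
move=> x /=; rewrite normrM real_complexM -normc_complexE -mulrA.
by rewrite ler_wpM2l // dual_normR_bound.
Qed.

Definition dual_norm (f : dual_space) : K := (dual_normR f)%:C.

Lemma dual_norm_triangle f g : dual_norm (f + g) <= dual_norm f + dual_norm g.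
Proof.
rewrite /dual_norm -real_complexD lecR; apply: dual_normR_le; split.
  by rewrite addr_ge0 ?dual_normR_ge0.
move=> x /=; rewrite real_complexD mulrDl; apply: le_trans (ler_normD _ _) _.
by rewrite lerD ?dual_normR_bound.
Qed.

Lemma dual_normZ k f : dual_norm (k *: f) = `|k| * dual_norm f.
Proof.
rewrite /dual_norm normc_complexE -real_complexM; congr (_%:C).
apply/eqP; rewrite eq_le dual_normR_scale andTb.
have [->|k_neq0] := eqVneq k 0; first by rewrite normr0 mul0r dual_normR_ge0.
have k_gt0 : 0 < Re `|k| by rewrite -ltcR -normc_complexE normr_gt0.
rewrite -ler_pdivlMl //.
have -> : dual_normR f = dual_normR (k^-1 *: (k *: f)) by rewrite scalerA mulVf ?scale1r.
apply: le_trans (dual_normR_scale _ _) _; rewrite ler_wpM2r ?dual_normR_ge0 //.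
by rewrite -lecR real_complexV -!normc_complexE normfV.
Qed.

Lemma dual_norm_eq0 f : dual_norm f = 0 -> f = 0.
Proof.
move=> /complexI f0; apply: eq_dual_space => x /=.
apply/normr0_eq0/eqP; rewrite eq_le normr_ge0 andbT.
by have := dual_normR_bound f x; rewrite f0 mul0r.
Qed.

HB.instance Definition _ :=
  Lmodule_isNormed.Build K dual_space dual_norm_triangle dual_normZ dual_norm_eq0.

End DualSpace.

Section DualComplete.
Variables (R : realType) (X : normedModType R[i]).
Local Notation K := R[i].
Local Notation Kt := (R[i] : numFieldType).
Local Notation Re := (@complex.Re R).
Variable F : set_system (dual_space X).
Hypotheses (FF : ProperFilter F) (FC : cauchy F).

Lemma dual_cauchy_uniform e : 0 < e ->
  exists2 S, F S & forall f g, S f -> S g -> forall x, `|f x - g x| <= e%:C * `|x|.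
Proof.
move=> e0; have /cauchy_ballP/(_ e%:C) := FC; rewrite ltcR => /(_ e0).
move=> /near2_square[S FS ballS]; exists S => // f g Sf Sg x.
apply: le_trans (dual_normR_bound (f - g) x) _; rewrite ler_wpM2r // lecR.
by have := ballS f g Sf Sg; rewrite -ball_normE /= => /ltW; rewrite lecR.
Qed.

Lemma dual_pointwise_cvg x : cvg ((fun f : dual_space X => f x : Kt) @ F).
Proof.
apply: complex_cauchy_cvg; apply/cauchy_ballP => e e0.
have e_gt0 : 0 < Re e by rewrite -ltcR -ger0_complexE ?ltW.
set c := Re e / (Re `|x| + 1).
have c_gt0 : 0 < c by rewrite divr_gt0 // ltr_wpDl ?Re_ge0.
have [S FS hS] := dual_cauchy_uniform c_gt0.
rewrite near_map2; exists (S, S) => // -[f g] /= [Sf Sg].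
rewrite -ball_normE /=; apply: le_lt_trans (hS f g Sf Sg x) _.
rewrite (normr_complexE x) -real_complexM (ger0_complexE (ltW e0)) ltcR.
rewrite /c mulrAC ltr_pdivrMr ?ltr_wpDl ?Re_ge0 //.
by rewrite ltr_pM2l // ltrDl.
Qed.

Definition dual_lim (x : X) : K := lim ((fun f : dual_space X => f x : Kt) @ F).

Lemma dual_lim_cvg x : (fun f : dual_space X => f x : Kt) @ F --> (dual_lim x : Kt).
Proof. exact: dual_pointwise_cvg. Qed.

Lemma dual_lim_lin : lin dual_lim.
Proof.
move=> k u v; rewrite {1}/dual_lim.
have -> : (fun f : dual_space X => f (k *: u + v) : Kt) = (fun f => k * f u + f v).
  by apply/funext => f; rewrite (dual_funP f).1.
apply: (cvg_lim (@norm_hausdorff _ Kt)); apply: cvgD; [apply: cvgMl_tmp|]; exact: dual_lim_cvg.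
Qed.

Lemma dual_lim_uniform e : 0 < e ->
  exists2 S, F S & forall f, S f -> forall x, `|f x - dual_lim x| <= e%:C * `|x|.
Proof.
move=> e0; have [S FS hS] := dual_cauchy_uniform e0; exists S => // f Sf x.
have ball_closed := closed_closed_ball_num (x := f x : Kt) (r := e%:C * `|x|).
apply: (@closed_cvg _ Kt F FF (fun g : dual_space X => g x : Kt) _ ball_closed);
  last exact: dual_lim_cvg.
by apply: filterS FS => g Sg; apply: hS.
Qed.

Lemma dual_lim_bounded : bounded_functional dual_lim.
Proof.
split; first exact: dual_lim_lin.
have [S FS hS] := dual_lim_uniform ltr01; have [f Sf] := filter_ex FS.
exists (dual_normR f + 1) => x; rewrite real_complexD mulrDl.
have -> : dual_lim x = f x - (f x - dual_lim x) by rewrite opprB addrC subrK.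
by apply: le_trans (ler_normB _ _) _; rewrite lerD ?dual_normR_bound ?hS.
Qed.

Lemma dual_cauchy_cvg : cvg F.
Proof.
apply/cvg_ex; exists (DualSpace dual_lim_bounded); apply/cvgrPdist_le => e e0.
have e_gt0 : 0 < Re e by rewrite -ltcR -ger0_complexE ?ltW.
have [S FS hS] := dual_lim_uniform e_gt0; apply: filterS FS => f Sf.
rewrite (ger0_complexE (ltW e0)) lecR; apply: dual_normR_le.
split=> [|x /=]; first exact: ltW.
by rewrite distrC hS.
Qed.

End DualComplete.

HB.instance Definition _ (R : realType) (X : normedModType R[i]) :=
  Uniform_isComplete.Build (dual_space X) (@dual_cauchy_cvg R X).

(** * Banach bimodules *)

Lemma continuous_lin_bounded (R : realType) (V W : normedModType R[i]) (f : V -> W) :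
  lin f -> continuous f -> exists2 C : R, 0 <= C & forall x, `|f x| <= C%:C * `|x|.
Proof.
move=> f_lin f_cont.
pose fL : {linear V -> W} := HB.pack f (GRing.isLinear.Build _ _ _ _ f f_lin).
have /linear_boundedP/pinfty_ex_gt0[r r0 fr] :=
  @continuous_linear_bounded _ _ _ 0 fL (f_cont 0).
by exists (complex.Re r); rewrite ?Re_ge0 -?ger0_complexE ?ltW.
Qed.

Lemma Bphi_banach_bimodule (R : realType) (A B : completeNormedModType R[i])
    (mulA : A -> A -> A) (mulB : B -> B -> B) (phi : A -> B) :
  banach_algebra mulB -> cont_hom mulA mulB phi ->
  banach_bimodule mulA (lact_phi mulB phi) (ract_phi mulB phi).
Proof.
move=> [[mulB_linl mulB_linr] mulBA mulB_norm] [phi_lin phiM phi_cont].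
have [C C0 phi_bound] := continuous_lin_bounded phi_lin phi_cont.
rewrite /lact_phi /ract_phi; split.
- split; split=> [a|b].
  + exact: mulB_linl.
  + exact: lin_comp (mulB_linr b) phi_lin.
  + exact: mulB_linr.
  + exact: lin_comp (mulB_linl b) phi_lin.
- by move=> a b x; rewrite phiM mulBA.
- by move=> a b x; rewrite phiM mulBA.
- by move=> a b x; rewrite mulBA.
- exists C => a x; split; apply: le_trans (mulB_norm _ _) _.
  + by rewrite ler_wpM2r.
  + by rewrite [X in X <= _]mulrC ler_wpM2r.
Qed.

Section BanachBimodule.
Variable R : realType.
Local Notation K := R[i].
Variables (A X : completeNormedModType K) (mulA : A -> A -> A).
Variables (l : A -> X -> X) (r : X -> A -> X).
Hypothesis hX : banach_bimodule mulA l r.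

Lemma bimodule_bound : exists2 C : R, 0 <= C & forall a x,
  `|l a x| <= C%:C * `|a| * `|x| /\ `|r x a| <= C%:C * `|a| * `|x|.
Proof.
case: hX => _ _ _ _ [C hC]; exists (Num.max C 0); first by rewrite le_max lexx orbT.
move=> a x; rewrite -!mulrA; have [la ra] := hC a x.
by split; [apply: le_trans la _ | apply: le_trans ra _];
  rewrite -mulrA ler_max0_mul ?mulr_ge0.
Qed.

Lemma lact_lin a : lin (l a). Proof. by case: hX => -[[]]. Qed.
Lemma lact_lin_alg x : lin (l^~ x). Proof. by case: hX => -[[]]. Qed.
Lemma ract_lin a : lin (r^~ a). Proof. by case: hX => -[_ []]. Qed.
Lemma ract_lin_alg x : lin (r x). Proof. by case: hX => -[_ []]. Qed.

Lemma dual_lactP a (f : dual_space X) : bounded_functional (fun x => f (r x a)).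
Proof.
have [C C0 hC] := bimodule_bound; apply: (dual_compP (c := C * complex.Re `|a|)).
  exact: ract_lin.
by move=> x; rewrite real_complexM -normr_complexE; case: (hC a x).
Qed.

Lemma dual_ractP a (f : dual_space X) : bounded_functional (fun x => f (l a x)).
Proof.
have [C C0 hC] := bimodule_bound; apply: (dual_compP (c := C * complex.Re `|a|)).
  exact: lact_lin.
by move=> x; rewrite real_complexM -normr_complexE; case: (hC a x).
Qed.

Definition dual_lact a f : dual_space X := DualSpace (dual_lactP a f).
Definition dual_ract f a : dual_space X := DualSpace (dual_ractP a f).

Lemma dual_banach_bimodule : banach_bimodule mulA dual_lact dual_ract.
Proof.
have [C C0 hC] := bimodule_bound; case: hX => _ lactM ractM lractA _.
split.
- split; split=> [a k f g|f k a b]; apply: eq_dual_space => x //=.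
  + by rewrite (ract_lin_alg x) (dual_funP f).1.
  + by rewrite (lact_lin_alg x) (dual_funP f).1.
- by move=> a b f; apply: eq_dual_space => x /=; rewrite ractM.
- by move=> a b f; apply: eq_dual_space => x /=; rewrite lactM.
- by move=> a b f; apply: eq_dual_space => x /=; rewrite lractA.
- exists C => a f; rewrite [`|a|]normr_complexE -!real_complexM [_ * dual_normR f]mulrC.
  split; rewrite [`|_ : dual_space X|]/= lecR; apply: dual_normR_le;
    (split=> [|x]; first by rewrite !mulr_ge0 ?Re_ge0 ?dual_normR_ge0);
    [apply: (dual_normR_comp (g := r^~ a)) | apply: (dual_normR_comp (g := l a))];
    by move=> y; rewrite real_complexM -normr_complexE; case: (hC a y).
Qed.

End BanachBimodule.

(** * The module extension algebra *)

Section ModuleExtension.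
Variable R : realType.
Local Notation K := R[i].
Variables (U V : completeNormedModType K).

Definition module_ext := (U * V)%type.
HB.instance Definition _ :=
  NormedModule.copy module_ext ((U * V)%type : normedModType K).

Lemma module_ext_cauchy_cvg (F : set_system module_ext) :
  ProperFilter F -> cauchy F -> cvg F.
Proof.
move=> FF /cauchy_ballP FC.
have proj_cvg (W : completeNormedModType K) (p : module_ext -> W) :
    (forall u v e, ball u e v -> ball (p u) e (p v)) -> cvg (p @ F).
  move=> p_ball; apply: cauchy_cvg; apply/cauchy_ballP => e e0.
  by rewrite near_map2; apply: filterS (FC e e0) => -[u v] /p_ball.
have fst_cvg := proj_cvg _ fst (fun _ _ _ ball_uv => ball_uv.1).
have snd_cvg := proj_cvg _ snd (fun _ _ _ ball_uv => ball_uv.2).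
apply/cvg_ex; exists (lim (fst @ F), lim (snd @ F)).
have -> : F = (fun u => (u.1, u.2)) @ F.
  by apply/funext => P; rewrite /fmap /=; congr F; apply/funext => -[].
exact: cvg_pair.
Qed.

HB.instance Definition _ := Uniform_isComplete.Build module_ext module_ext_cauchy_cvg.

Lemma module_ext_normE (u : module_ext) : `|u| = Num.max `|u.1| `|u.2|.
Proof. by []. Qed.

Lemma module_ext_norm_fst (u : module_ext) : `|u.1| <= `|u|.
Proof.
by rewrite module_ext_normE comparable_le_max ?lexx // real_comparable ?ger0_real.
Qed.

Lemma module_ext_norm_snd (u : module_ext) : `|u.2| <= `|u|.
Proof.
by rewrite module_ext_normE comparable_le_max ?lexx ?orbT // real_comparable ?ger0_real.
Qed.

Lemma module_ext_norm_le (u : module_ext) (c : K) :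
  `|u.1| <= c -> `|u.2| <= c -> `|u| <= c.
Proof.
move=> u1c u2c; rewrite module_ext_normE comparable_ge_max ?u1c ?u2c //.
by rewrite real_comparable ?ger0_real.
Qed.

Lemma module_ext_norm0x (v : V) : `|(0, v) : module_ext| = `|v|.
Proof.
apply/eqP; rewrite eq_le (module_ext_norm_snd (0, v)) andbT.
by rewrite module_ext_norm_le ?normr0.
Qed.

End ModuleExtension.

Section ModuleExtensionDual.
Variables (R : realType) (U : completeNormedModType R[i]) (X : normedModType R[i]).

Lemma module_ext_eval_le x (u : module_ext U (dual_space X)) :
  `|u.2 x| <= (complex.Re `|x|)%:C * `|u|.
Proof.
rewrite -normr_complexE mulrC; apply: le_trans (dual_normR_bound u.2 x) _.
by rewrite ler_wpM2r // (module_ext_norm_snd u).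
Qed.

Lemma module_ext_evalP x :
  bounded_functional (fun u : module_ext U (dual_space X) => u.2 x).
Proof.
split=> [k u w|] //; exists (complex.Re `|x|); exact: module_ext_eval_le.
Qed.

End ModuleExtensionDual.

Section ModuleExtensionAlgebra.
Variable R : realType.
Local Notation K := R[i].
Variables (A Y : completeNormedModType K) (mulA : A -> A -> A).
Variables (l : A -> Y -> Y) (r : Y -> A -> Y).
Hypotheses (hA : banach_algebra mulA) (hY : banach_bimodule mulA l r).
Local Notation B := (module_ext A Y).

Definition ext_mul (u v : B) : B := (mulA u.1 v.1, l u.1 v.2 + r u.2 v.1).

Lemma mulA_linr a : lin (mulA a). Proof. by case: hA => -[]. Qed.
Lemma mulA_linl b : lin (mulA^~ b). Proof. by case: hA => -[]. Qed.

Lemma ext_mul_linr u : lin (ext_mul u).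
Proof.
move=> k v w; apply: injective_projections => /=; first exact: mulA_linr.
by rewrite (lact_lin hY) (ract_lin_alg hY) scalerDr addrACA.
Qed.

Lemma ext_mul_linl v : lin (ext_mul^~ v).
Proof.
move=> k u w; apply: injective_projections => /=; first exact: mulA_linl.
by rewrite (lact_lin_alg hY) (ract_lin hY) scalerDr addrACA.
Qed.

Lemma ext_mulA : associative ext_mul.
Proof.
case: hA hY => _ mulAA _ [_ lactM ractM lractA _] u v w.
apply: injective_projections => /=; first exact: mulAA.
by rewrite lactM ractM (linD (lact_lin hY _)) (linD (ract_lin hY _)) lractA !addrA.
Qed.

Lemma ext_mul_bound :
  exists2 s : R, 0 < s & forall u v, `|ext_mul u v| <= s%:C * `|u| * `|v|.
Proof.
have [C C0 hC] := bimodule_bound hY.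
have mulA_norm a b : `|mulA a b| <= `|a| * `|b| by case: hA.
exists (1 + (C + C)) => [|u v]; first by rewrite ltr_wpDr ?addr_ge0.
have uv0 : 0 <= `|u| * `|v| by rewrite mulr_ge0.
rewrite -mulrA real_complexD mulrDl; apply: module_ext_norm_le => /=.
  apply: le_trans (mulA_norm _ _) _; rewrite mul1r ler_wpDr ?mulr_ge0 ?ler0c ?addr_ge0 //.
  by rewrite ler_pM ?module_ext_norm_fst.
apply: ler_wpDl; first by rewrite mulr_ge0 ?ler0c.
rewrite real_complexD mulrDl; apply: le_trans (ler_normD _ _) _.
have [lb _] := hC u.1 v.2; have [_ rb] := hC v.1 u.2.
rewrite lerD //; [apply: le_trans lb _ | apply: le_trans rb _];
  rewrite -mulrA ler_wpM2l ?ler0c // ?[`|v.1| * _]mulrC;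
  by rewrite ler_pM ?module_ext_norm_fst ?module_ext_norm_snd.
Qed.

Section Rescaled.
Variable s : R.
Hypotheses (s_gt0 : 0 < s) (ext_mul_le : forall u v, `|ext_mul u v| <= s%:C * `|u| * `|v|).

(* Dividing by [s] makes the product submultiplicative for the max norm;
   the embedding multiplies by [s] to compensate. *)
Definition rescaled_ext_mul (u v : B) : B := s%:C^-1 *: ext_mul u v.
Definition ext_embed (a : A) : B := (s%:C *: a, 0).

Let s_neq0 : s%:C != 0 :> K. Proof. by rewrite eq_complex /= eqxx andbT gt_eqF. Qed.

Lemma rescaled_ext_mul_banach_algebra : banach_algebra rescaled_ext_mul.
Proof.
have s_inv_ge0 : 0 <= s%:C^-1 :> K by rewrite invr_ge0 ler0c ltW.
split.
- split=> [u|v] k w1 w2; rewrite /rescaled_ext_mul.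
    by rewrite ext_mul_linr scalerDr !scalerA mulrC.
  by rewrite (ext_mul_linl v) scalerDr !scalerA mulrC.
- move=> u v w; rewrite /rescaled_ext_mul.
  by rewrite (linZ (ext_mul_linl w)) (linZ (ext_mul_linr u)) ext_mulA.
- move=> u v; rewrite /rescaled_ext_mul normrZ ger0_norm //.
  apply: le_trans (ler_wpM2l s_inv_ge0 (ext_mul_le u v)) _.
  by rewrite !mulrA mulVf // mul1r.
Qed.

Lemma ext_embed_mull a u : rescaled_ext_mul (ext_embed a) u = (mulA a u.1, l a u.2).
Proof.
apply: injective_projections => /=.
  by rewrite (linZ (mulA_linl _)) scalerA mulVf // scale1r.
by rewrite (linZ (lact_lin_alg hY _)) (lin0 (ract_lin hY _)) addr0 scalerA mulVf // scale1r.
Qed.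

Lemma ext_embed_mulr u a : rescaled_ext_mul u (ext_embed a) = (mulA u.1 a, r u.2 a).
Proof.
apply: injective_projections => /=.
  by rewrite (linZ (mulA_linr _)) scalerA mulVf // scale1r.
by rewrite (linZ (ract_lin_alg hY _)) (lin0 (lact_lin hY _)) add0r scalerA mulVf // scale1r.
Qed.

Lemma ext_embed_cont_hom : cont_hom mulA rescaled_ext_mul ext_embed.
Proof.
split.
- move=> k a b; apply: injective_projections => /=; last by rewrite scaler0 addr0.
  by rewrite scalerDr !scalerA mulrC.
- move=> a b; rewrite ext_embed_mull; apply: injective_projections => /=.
    by rewrite (linZ (mulA_linr _)).
  by rewrite (lin0 (lact_lin hY _)).
- move=> a; apply: cvg_pair; [exact: scaler_continuous | exact: cvg_cst].
Qed.

Lemma ext_embed_inj : injective ext_embed.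
Proof. by move=> a b /(congr1 fst) /= /(scalerI s_neq0). Qed.

End Rescaled.

Lemma module_ext_algebra : exists (mulB : B -> B -> B) (phi : A -> B),
  [/\ banach_algebra mulB, cont_hom mulA mulB phi, injective phi,
      forall a, (phi a).2 = 0 &
      forall a u, mulB (phi a) u = (mulA a u.1, l a u.2) /\
                  mulB u (phi a) = (mulA u.1 a, r u.2 a)].
Proof.
have [s s_gt0 ext_mul_le] := ext_mul_bound.
exists (rescaled_ext_mul s), (ext_embed s); split.
- exact: rescaled_ext_mul_banach_algebra.
- exact: ext_embed_cont_hom.
- exact: ext_embed_inj.
- by [].
- by move=> a u; rewrite ext_embed_mull ?ext_embed_mulr.
Qed.

End ModuleExtensionAlgebra.

(** * Derivations and amenability *)

Section BidualRepresentation.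
Variables (R : realType) (X : completeNormedModType R[i]).

(* Elements of the bidual act on all of [X -> K]; extend by [0] off the
   bounded functionals. *)
Definition bidual_of (G : dual_space X -> R[i]) (h : X -> R[i]) : R[i] :=
  if pselect (bounded_functional h) is left hb then G (DualSpace hb) else 0.

Lemma bidual_ofE G h (hb : bounded_functional h) : bidual_of G h = G (DualSpace hb).
Proof.
rewrite /bidual_of; case: pselect => [hb'|]; last by [].
by congr G; apply: dual_space_ext.
Qed.

Lemma bidual_of_elem G : bounded_functional G -> bidual_elem (bidual_of G).
Proof.
move=> [G_lin [MG G_bound]]; split=> [k f g hf hg|].
  rewrite (bidual_ofE _ (bounded_functionalD (bounded_functionalZ k hf) hg)).
  rewrite !bidual_ofE -G_lin; congr G; exact: dual_space_ext.
exists (Num.max MG 0) => f M f_lin M0 f_bound.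
have hf : bounded_functional f by split; [|exists M].
rewrite (bidual_ofE _ hf); apply: le_trans (G_bound _) _.
apply: le_trans (ler_max0_mul _ (normr_ge0 _)) _.
by rewrite ler_wpM2l ?ler0c ?le_max ?lexx ?orbT //= lecR dual_normR_le.
Qed.

End BidualRepresentation.

Section Amenability.
Variable R : realType.
Local Notation K := R[i].
Variables (A : completeNormedModType K) (mulA : A -> A -> A).
Hypothesis hA : banach_algebra mulA.

Section ExtensionDerivations.
Variables (Y : completeNormedModType K) (l : A -> Y -> Y) (r : Y -> A -> Y).
Variables (mulB : module_ext A Y -> module_ext A Y -> module_ext A Y).
Variable phi : A -> module_ext A Y.
Hypothesis phi_mul : forall a u,
  mulB (phi a) u = (mulA a u.1, l a u.2) /\ mulB u (phi a) = (mulA u.1 a, r u.2 a).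
Local Notation lB := (lact_phi mulB phi).
Local Notation rB := (ract_phi mulB phi).

Lemma dual_derivation_module_ext (D : A -> Y -> K) :
  dual_derivation mulA l r D -> dual_derivation mulA lB rB (fun a u => D a u.2).
Proof.
move=> [D_lin D_linA [C D_bound] D_der].
split=> [a k u w|k a b u||a b u] /=.
- exact: D_lin.
- exact: D_linA.
- exists (Num.max C 0) => a u; apply: le_trans (D_bound a u.2) _.
  rewrite -!mulrA; apply: le_trans (ler_max0_mul _ (mulr_ge0 _ _)) _ => //.
  by rewrite ler_wpM2l ?ler0c ?le_max ?lexx ?orbT // ler_wpM2l ?module_ext_norm_snd.
- by rewrite /lact_phi /ract_phi (phi_mul b u).1 (phi_mul a u).2 D_der.
Qed.

Lemma dual_inner_of_module_ext (D : A -> Y -> K) :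
  dual_inner lB rB (fun a u => D a u.2) -> dual_inner l r D.
Proof.
move=> [F [[F_lin [M F_bound]] F_inner]]; exists (fun y => F (0, y)); split.
  split=> [k y z|].
    by rewrite -F_lin; congr F; apply: injective_projections; rewrite /= ?scaler0 ?addr0.
  by exists M => y; apply: le_trans (F_bound _) _; rewrite module_ext_norm0x.
move=> a y; have := F_inner a (0, y).
rewrite /lact_phi /ract_phi (phi_mul a _).1 (phi_mul a _).2 /=.
by rewrite (lin0 (mulA_linl hA _)) (lin0 (mulA_linr hA _)).
Qed.

Lemma bidual_derivation_module_ext (delta : A -> Y) :
  lin delta -> (exists C : R, forall a, `|delta a| <= C%:C * `|a|) ->
  (forall a b, delta (mulA a b) = r (delta a) b + l a (delta b)) ->
  bidual_derivation mulA lB rB (fun a h => h (0, delta a)).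
Proof.
move=> delta_lin [C delta_bound] delta_der.
split=> [a|k a b f [f_lin _]||a b f [f_lin _]].
- split=> //; exists (complex.Re `|delta a|) => f M f_lin M0 f_bound.
  by apply: le_trans (f_bound _) _; rewrite module_ext_norm0x mulrC -normr_complexE.
- rewrite -f_lin; congr f; apply: injective_projections => /=.
    by rewrite scaler0 addr0.
  exact: delta_lin.
- exists (Num.max C 0) => a f M f_lin M0 f_bound.
  apply: le_trans (f_bound _) _; rewrite module_ext_norm0x mulrC ler_wpM2r ?ler0c //.
  exact: le_trans (delta_bound a) (ler_max0_mul _ _).
- rewrite /lact_phi /ract_phi (phi_mul b _).2 (phi_mul a _).1 -(linD f_lin).
  congr f; apply: injective_projections => /=.
    by rewrite (lin0 (mulA_linl hA _)) (lin0 (mulA_linr hA _)) addr0.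
  exact: delta_der.
Qed.

End ExtensionDerivations.

Lemma amenable_of_symmetric_inner :
  (forall (B : completeNormedModType K) (mulB : B -> B -> B) (phi : A -> B),
     banach_algebra mulB -> cont_hom mulA mulB phi -> injective phi ->
     forall D : A -> B -> K,
       dual_derivation mulA (lact_phi mulB phi) (ract_phi mulB phi) D ->
       (forall a b, D a (phi b) + D b (phi a) = 0) ->
       dual_inner (lact_phi mulB phi) (ract_phi mulB phi) D) ->
  amenable mulA.
Proof.
move=> sym_inner X l r hX D hD.
have [mulB [phi [hB phi_hom phi_inj phi_snd phi_mul]]] := module_ext_algebra hA hX.
apply: (dual_inner_of_module_ext phi_mul); apply: sym_inner => //.
  exact: dual_derivation_module_ext.
by case: hD => D_lin _ _ _ a b; rewrite !phi_snd !(lin0 (D_lin _)) addr0.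
Qed.

Lemma amenable_bidual_H1_trivial (X : completeNormedModType K)
    (l : A -> X -> X) (r : X -> A -> X) :
  amenable mulA -> banach_bimodule mulA l r -> H1_bidual_trivial mulA l r.
Proof.
move=> am hX D [D_elem D_linA [C D_bound] D_der].
have hD : dual_derivation mulA (dual_lact hX) (dual_ract hX) (fun a f => D a f).
  split=> [a k f g|k a b f||a b f].
  - exact: (D_elem a).1 k f g (dual_funP f) (dual_funP g).
  - exact/D_linA/dual_funP.
  - exists C => a f; apply: D_bound.
    + exact: (dual_funP f).1.
    + exact: dual_normR_ge0.
    + exact: dual_normR_bound.
  - exact/D_der/dual_funP.
have [G [G_bounded G_inner]] := am _ _ _ (dual_banach_bimodule hX) _ hD.
exists (bidual_of G); split; first exact: bidual_of_elem G_bounded.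
move=> a f hf; rewrite (bidual_ofE _ (dual_ractP hX a (DualSpace hf))).
by rewrite (bidual_ofE _ (dual_lactP hX a (DualSpace hf))) -G_inner.
Qed.

Lemma amenable_of_bidual_H1_trivial :
  (forall (B : completeNormedModType K) (mulB : B -> B -> B) (phi : A -> B),
     banach_algebra mulB -> cont_hom mulA mulB phi -> injective phi ->
     H1_bidual_trivial mulA (lact_phi mulB phi) (ract_phi mulB phi)) ->
  amenable mulA.
Proof.
move=> bidual_trivial X l r hX D [D_lin D_linA [C D_bound] D_der].
pose Y := dual_space X; have hY := dual_banach_bimodule hX.
have [mulB [phi [hB phi_hom phi_inj _ phi_mul]]] := module_ext_algebra hA hY.
have D_bounds a : functional_bounds (D a) (Num.max C 0 * complex.Re `|a|).
  split=> [|x]; first by rewrite mulr_ge0 ?le_max ?lexx ?orbT ?Re_ge0.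
  rewrite real_complexM -normr_complexE; apply: le_trans (D_bound a x) _.
  by rewrite -!mulrA ler_max0_mul ?mulr_ge0.
pose Dy a : Y := DualSpace (conj (D_lin a) (ex_intro _ _ (D_bounds a).2)).
have [|||F [[F_lin [CF F_bound]] F_inner]] := bidual_trivial _ _ _ hB phi_hom phi_inj _
  (bidual_derivation_module_ext phi_mul (delta := Dy) _ _ _).
- by move=> k a b; apply: eq_dual_space => x; apply: D_linA.
- exists (Num.max C 0) => a; rewrite [`|a|]normr_complexE -real_complexM [`|_ : Y|]/= lecR.
  by apply: dual_normR_le; exact: D_bounds.
- by move=> a b; apply: eq_dual_space => x; apply: D_der.
pose ev x (u : module_ext A Y) : K := u.2 x.
have evP x : bounded_functional (ev x) := module_ext_evalP A x.
exists (fun x => F (ev x)); split.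
  split=> [k x y|].
    rewrite -(F_lin _ _ _ (evP x) (evP y)); congr F; apply/funext => u.
    exact: (dual_funP u.2).1.
  exists CF => x; rewrite [X in _ <= _ * X]normr_complexE.
  by apply: F_bound; [exact: (evP x).1 | exact: Re_ge0 | exact: module_ext_eval_le].
move=> a x; rewrite -[D a x]/(ev x (0, Dy a)) (F_inner _ _ (evP x)).
by congr (F _ - F _); apply/funext => u;
  rewrite /ev /lact_phi /ract_phi ?(phi_mul a u).1 ?(phi_mul a u).2.
Qed.

End Amenability.

Unset Implicit Arguments. Set Strict Implicit.
Local Close Scope classical_set_scope.
Theorem theorem2p1 (R : realType) (A : completeNormedModType R[i])
  (mulA : A -> A -> A) (hA : banach_algebra mulA) :
  [<->
   (* (i) *) amenable mulA;
   (* (ii) *)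
   (forall (B : completeNormedModType R[i]) (mulB : B -> B -> B) (phi : A -> B),
      banach_algebra mulB -> cont_hom mulA mulB phi ->
      H1_dual_trivial mulA (lact_phi mulB phi) (ract_phi mulB phi));
   (* (iii) *)
   (forall (B : completeNormedModType R[i]) (mulB : B -> B -> B) (phi : A -> B),
      banach_algebra mulB -> cont_hom mulA mulB phi -> injective phi ->
      H1_dual_trivial mulA (lact_phi mulB phi) (ract_phi mulB phi));
   (* (iv) *)
   (forall (B : completeNormedModType R[i]) (mulB : B -> B -> B) (phi : A -> B),
      banach_algebra mulB -> cont_hom mulA mulB phi -> injective phi ->
      forall D : A -> B -> R[i],
        dual_derivation mulA (lact_phi mulB phi) (ract_phi mulB phi) D ->
        (forall a b, D a (phi b) + D b (phi a) = 0) ->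
        dual_inner (lact_phi mulB phi) (ract_phi mulB phi) D);
   (* (v) *)
   (forall (B : completeNormedModType R[i]) (mulB : B -> B -> B) (phi : A -> B),
      banach_algebra mulB -> cont_hom mulA mulB phi -> injective phi ->
      H1_bidual_trivial mulA (lact_phi mulB phi) (ract_phi mulB phi))].
Proof.
tfae.
- by move=> am B mulB phi hB hphi; apply/am/Bphi_banach_bimodule.
- by move=> Bphi_trivial B mulB phi hB hphi _; apply: Bphi_trivial.
- by move=> inj_trivial B mulB phi hB hphi phi_inj D hD _; apply: inj_trivial.
- move=> sym_inner B mulB phi hB hphi _; apply: amenable_bidual_H1_trivial.
    exact: amenable_of_symmetric_inner hA sym_inner.
  exact: Bphi_banach_bimodule.
- exact: amenable_of_bidual_H1_trivial.
Qed.
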